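(* Assume that $\boldsymbol{\chi}$ has Property NIO. Then there exists an $\ell$-adic character $\chi_0$, possibly over a finite extension $\mathbf{F}_{q^{\nu}}$ of $\mathbf{F}_q$, such that the tuple $\chi_0\boldsymbol{\chi}=(\chi_0\chi_1,\ldots,\chi_0\chi_k)$ has Property CGM over $\mathbf{F}_{q^{\nu}}$.
   Context: Let $\boldsymbol{\chi}=(\chi_1,\ldots,\chi_k)$, $k\geq2$, be a tuple of $\ell$-adic characters of $\mathbf{F}_q^\times$ (characters of a finite field $\mathbf{F}_{q^\nu}$ are composed with the norm when viewed over extensions), and $\Lambda=\chi_1\cdots\chi_k$. The tuple is Kummer-induced if there is a divisor $d\neq1$ of $k$ and characters $\xi_1,\ldots,\xi_{k/d}$ such that the $\chi_i$ are exactly (with multiplicity) all characters $\chi$ with $\chi^d=\xi_j$ for some $j$. It is self-dual if there is a character $\xi$ (dualizing character) such that the multiset of the $\chi_i$ is stable under $\chi\mapsto\xi\chi^{-1}$; a self-dual tuple is alternating if $k$ is even and $\Lambda=\xi^{k/2}$, symmetric otherwise. Property NIO: not Kummer-induced and, if $k$ is even, not self-dual symmetric. Property CGM: not Kummer-induced, $\chi_1\cdots\chi_k=1$, and either $k$ is odd, or the tuple is not self-dual, or $k$ is even, the tuple is self-dual alternating and the dualizing character $\xi$ is trivial. *)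

From HB Require Import structures.
From mathcomp Require Import all_boot all_order all_algebra all_fingroup all_field.
Set Implicit Arguments. Unset Strict Implicit. Unset Printing Implicit Defensive.
Import GRing.Theory Num.Theory.
Local Open Scope ring_scope.

(* Characters of the multiplicative group F^x of a finite field F, with values
   in algC (algebraic closure of Q). *)
Definition chr (F : finFieldType) := {ffun {unit F} -> algC}.

Definition is_char (F : finFieldType) (f : chr F) : Prop :=
  f 1%g = 1 /\ forall x y : {unit F}, f (x * y)%g = f x * f y.

Definition cmul (F : finFieldType) (a b : chr F) : chr F := [ffun u => a u * b u].
Definition cinv (F : finFieldType) (a : chr F) : chr F := [ffun u => (a u)^-1].
Definition cexp (F : finFieldType) (a : chr F) (n : nat) : chr F := [ffun u => a u ^+ n].
Definition ctriv (F : finFieldType) : chr F := [ffun => 1].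
Definition cprod (F : finFieldType) (s : seq (chr F)) : chr F := foldr (@cmul F) (ctriv F) s.

Definition kummer_induced (F : finFieldType) (s : seq (chr F)) : Prop :=
  exists (d : nat) (xis : seq (chr F)),
    [/\ (d %| size s)%N, d != 1%N, size xis = (size s %/ d)%N,
        (forall xi, xi \in xis -> is_char xi) &
        forall chi : chr F, is_char chi ->
          count_mem chi s = count (fun xi => cexp chi d == xi) xis].

Definition selfdual_wrt (F : finFieldType) (xi : chr F) (s : seq (chr F)) : Prop :=
  is_char xi /\ perm_eq s (map (fun chi => cmul xi (cinv chi)) s).

Definition alternating_wrt (F : finFieldType) (xi : chr F) (s : seq (chr F)) : Prop :=
  selfdual_wrt xi s /\ ~~ odd (size s) /\ cprod s = cexp xi (size s %/ 2).

Definition symmetric_wrt (F : finFieldType) (xi : chr F) (s : seq (chr F)) : Prop :=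
  selfdual_wrt xi s /\ ~ (~~ odd (size s) /\ cprod s = cexp xi (size s %/ 2)).

Definition NIO (F : finFieldType) (s : seq (chr F)) : Prop :=
  ~ kummer_induced s /\ (~~ odd (size s) -> ~ exists xi, symmetric_wrt xi s).

Definition CGM (F : finFieldType) (s : seq (chr F)) : Prop :=
  [/\ ~ kummer_induced s, cprod s = ctriv F &
      [\/ odd (size s), ~ (exists xi, selfdual_wrt xi s)
        | alternating_wrt (ctriv F) s]].

(* Norm map N_{L/F} : L^x -> F^x, u |-> u^((|L|-1)/(|F|-1)), read back in F
   through the embedding iota; a character chi of F^x is viewed over L as
   chi o N_{L/F}. *)
Definition lift_norm (F L : finFieldType) (iota : {rmorphism F -> L}) (chi : chr F) : chr L :=
  [ffun u : {unit L} =>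
     chi (odflt 1%g [pick y : {unit F} |
            iota (val y) == val u ^+ ((#|L| - 1) %/ (#|F| - 1))%N])].

(* Twisting by chi0 multiplies Lambda by chi0^k and turns a dualizing
   character xi into chi0^2 xi.  Over a large enough extension L of F one can
   solve chi0^k (Lambda o N) = 1, or, when the tuple is self-dual of even
   length (hence alternating, by NIO), chi0^2 (xi o N) = 1: the p'-part of the
   exponent divides |L| - 1 and the p-part is invertible modulo |L| - 1.  The
   norm L^x -> F^x is surjective, so lifting characters along it is injective;
   consequently twisting creates neither Kummer induction (each xi_j of a
   Kummer datum has at most d, hence by counting exactly d, d-th roots in the
   tuple, so the datum descends) nor self-duality (a dualizing character of
   the twisted tuple is the twist of chi_1 chi_j, where chi_j is the partner of
   chi_1). *)

From Pilot Require Import Defs.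
From HB Require Import structures.
From mathcomp Require Import all_boot all_order all_algebra all_fingroup.
From mathcomp Require Import all_solvable all_field.
From mathcomp Require Import ring.
From Stdlib Require Import Classical_Prop.

Set Implicit Arguments. Unset Strict Implicit. Unset Printing Implicit Defensive.
Import GRing.Theory Num.Theory.
Local Open Scope ring_scope.

Section Characters.
Variable K : finFieldType.
Implicit Types (a b : chr K) (u : {unit K}).

Lemma charX a u j : is_char a -> a (u ^+ j)%g = a u ^+ j.
Proof.
move=> [a1 aM]; elim: j => [|j IHj]; first by rewrite expg0 a1.
by rewrite expgS aM IHj exprS.
Qed.

Lemma char_neq0 a u : is_char a -> a u != 0.
Proof.
move=> [a1 aM]; apply/eqP => au0.
by have /eqP := aM u (u^-1)%g; rewrite mulgV a1 au0 mul0r oner_eq0.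
Qed.

Lemma unit_expg_card_pred u : (u ^+ #|K|.-1)%g = 1%g.
Proof. by rewrite -card_finField_unit expg_cardG ?inE. Qed.

Lemma finField_expr_card_pred (x : K) : x != 0 -> x ^+ #|K|.-1 = 1.
Proof.
move=> x_neq0; apply: (mulfI x_neq0).
by rewrite -exprS prednK ?expf_card ?mulr1 // ltnW ?finNzRing_gt1.
Qed.

Lemma char_unity_root a u : is_char a -> a u ^+ #|K|.-1 = 1.
Proof. by move=> ha; rewrite -charX // unit_expg_card_pred; case: ha. Qed.

Lemma cmul_char a b : is_char a -> is_char b -> is_char (cmul a b).
Proof.
move=> [a1 aM] [b1 bM]; split=> [|x y]; rewrite !ffunE ?a1 ?b1 ?mulr1 //.
by rewrite aM bM mulrACA.
Qed.

Lemma cexp_char a m : is_char a -> is_char (cexp a m).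
Proof.
move=> [a1 aM]; split=> [|x y]; rewrite !ffunE ?a1 ?expr1n //.
by rewrite aM exprMn.
Qed.

Lemma ctriv_char : is_char (ctriv K).
Proof. by split=> *; rewrite !ffunE ?mulr1. Qed.

Lemma cprod_char (s : seq (chr K)) :
  {in s, forall a, is_char a} -> is_char (Defs.cprod s).
Proof.
elim: s => [|a s IHs] hs; first exact: ctriv_char.
apply: cmul_char; first exact/hs/mem_head.
by apply: IHs => b bs; apply/hs; rewrite inE bs orbT.
Qed.

Variable g : {unit K}.
Hypothesis gen_g : <[g]>%g = [set: {unit K}].

Lemma mem_cycle_gen u : exists j, u = (g ^+ j)%g.
Proof.
have : u \in <[g]>%g by rewrite gen_g inE.
by case/cycleP => j ->; exists j.
Qed.

Lemma char_eq_gen a b : is_char a -> is_char b -> a g = b g -> a = b.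
Proof.
move=> ha hb eq_g; apply/ffunP => u; have [j ->] := mem_cycle_gen u.
by rewrite !charX // eq_g.
Qed.

Lemma char_of_unity_root (z : algC) : z ^+ #|K|.-1 = 1 ->
  exists a, is_char a /\ a g = z.
Proof.
rewrite -card_finField_unit -gen_g -orderE => zg.
have log_ex u : exists j, u == (g ^+ j)%g.
  by have [j ->] := mem_cycle_gen u; exists j.
pose lg u := ex_minn (log_ex u).
have lgK u : (g ^+ lg u)%g = u by rewrite /lg; case: ex_minnP => j /eqP.
have z_exp i j : (g ^+ i)%g = (g ^+ j)%g -> z ^+ i = z ^+ j.
  move/eqP; rewrite eq_expg_mod_order => /eqP eq_ij.
  by rewrite -(expr_mod i zg) eq_ij expr_mod.
exists [ffun u => z ^+ lg u]; split; first split.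
- by rewrite ffunE (z_exp _ 0%N) // lgK.
- by move=> x y; rewrite !ffunE -exprD; apply: z_exp; rewrite expgD !lgK.
- by rewrite ffunE (z_exp _ 1%N) ?lgK.
Qed.

Lemma count_char_roots_le (d : nat) (x : chr K) (U : seq (chr K)) :
  (0 < d)%N -> uniq U -> {in U, forall a, is_char a} ->
  (count (fun a => cexp a d == x) U <= d)%N.
Proof.
move=> d_gt0 uU charU; rewrite -size_filter.
set V := filter _ U.
have charV : {in V, forall a, is_char a /\ cexp a d = x}.
  by move=> a; rewrite mem_filter => /andP[/eqP-> /charU].
have := @max_poly_roots _ ('X^d - (x g)%:P) (map (fun a => a g) V).
rewrite size_XnsubC // size_map ltnS; apply.
- by rewrite -size_poly_eq0 size_XnsubC.
- apply/allP => _ /mapP[a aV ->]; have [_ <-] := charV a aV.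
  by rewrite rootE !hornerE ffunE subrr.
rewrite map_inj_in_uniq ?filter_uniq // => a b aV bV.
by apply: char_eq_gen; [case: (charV a aV) | case: (charV b bV)].
Qed.

End Characters.

Lemma unit_generator_exists (K : finFieldType) :
  exists g : {unit K}, <[g]>%g = [set: {unit K}].
Proof.
by have /cyclicP[g gen_g] := field_unit_group_cyclic [set: {unit K}]%G; exists g.
Qed.

Lemma finField_fixed_image (F L : finFieldType) (iota : {rmorphism F -> L}) (x : L) :
  x ^+ #|F| = x -> exists a, x = iota a.
Proof.
move=> xF; have : root (map_poly iota ('X^#|F| - 'X)) x.
  by rewrite rmorphB /= map_polyXn map_polyX rootE !hornerE xF subrr.
rewrite finField_genPoly rmorph_prod rootE horner_prod => /prodf_eq0[a _].
rewrite rmorphB /= map_polyX map_polyC !hornerE subr_eq0 => /eqP->.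
by exists a.
Qed.

Section Norm.
Variables (F L : finFieldType) (iota : {rmorphism F -> L}).
Hypothesis dvd_card : (#|F|.-1 %| #|L|.-1)%N.

Local Notation e := ((#|L| - 1) %/ (#|F| - 1))%N.

Definition norm_unit (u : {unit L}) : {unit F} :=
  odflt 1%g [pick y : {unit F} | iota (val y) == val u ^+ e].

Lemma lift_normE (chi : chr F) u : lift_norm iota chi u = chi (norm_unit u).
Proof. by rewrite ffunE. Qed.

Lemma norm_exp_mul : (e * #|F|.-1)%N = #|L|.-1.
Proof. by rewrite !subn1 divnK. Qed.

Lemma norm_unitE u : iota (val (norm_unit u)) = val u ^+ e.
Proof.
rewrite /norm_unit; case: pickP => [y /eqP // | no_y].
have [|a xa] := finField_fixed_image iota (x := val u ^+ e).
  set x := val u ^+ e; rewrite -(prednK (ltnW (finNzRing_gt1 F))) exprS /x -exprM.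
  by rewrite norm_exp_mul finField_expr_card_pred ?mulr1 // -unitfE (valP u).
have a_unit : a \is a GRing.unit.
  by rewrite unitfE -(fmorph_eq0 iota) -xa expf_eq0 negb_and -unitfE (valP u) orbT.
by have := no_y (FinRing.unit F a_unit); rewrite /= -xa eqxx.
Qed.

Lemma fmorph_val_unit_inj : injective (fun y : {unit F} => iota (val y)).
Proof. by move=> y z /fmorph_inj /val_inj. Qed.

Lemma norm_unitM u v : norm_unit (u * v)%g = (norm_unit u * norm_unit v)%g.
Proof.
apply: fmorph_val_unit_inj.
by rewrite /= norm_unitE FinRing.val_unitM rmorphM /= !norm_unitE exprMn.
Qed.

Lemma norm_unit1 : norm_unit 1%g = 1%g.
Proof.
by apply: (mulgI (norm_unit 1)); rewrite -norm_unitM !mulg1.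
Qed.

Lemma norm_unitX u j : norm_unit (u ^+ j)%g = (norm_unit u ^+ j)%g.
Proof. by elim: j => [|j IHj]; rewrite ?norm_unit1 // !expgS norm_unitM IHj. Qed.

Lemma norm_unit_surj y : exists u, norm_unit u = y.
Proof.
have [g gen_g] := unit_generator_exists L.
have e_gt0 : (0 < e)%N.
  rewrite lt0n; apply: contra_eqN norm_exp_mul => /eqP->.
  by rewrite mul0n eq_sym -lt0n ltn_predRL finNzRing_gt1.
have normg_exp j : ((norm_unit g ^+ j)%g == 1%g) = (#|F|.-1 %| j)%N.
  rewrite -(dvdn_pmul2l e_gt0) norm_exp_mul -card_finField_unit -gen_g.
  rewrite -orderE order_dvdn -norm_unitX -!val_eqE /= -(inj_eq (fmorph_inj iota)).
  by rewrite norm_unitE !FinRing.val_unitX /= rmorph1 -exprM mulnC.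
have gen_normg : <[norm_unit g]>%g = [set: {unit F}].
  apply/eqP; rewrite eqEcard subsetT /= -orderE card_finField_unit.
  by rewrite dvdn_leq ?order_gt0 // -normg_exp expg_order.
have [j ->] := mem_cycle_gen gen_normg y.
by exists (g ^+ j)%g; rewrite norm_unitX.
Qed.

End Norm.

Section Twist.
Variables (F L : finFieldType) (iota : {rmorphism F -> L}).
Hypothesis dvd_card : (#|F|.-1 %| #|L|.-1)%N.

Definition twist (c0 : chr L) (chi : chr F) : chr L := cmul c0 (lift_norm iota chi).

Lemma lift_norm_char chi : is_char chi -> is_char (lift_norm iota chi).
Proof.
move=> [chi1 chiM]; split=> [|u v]; rewrite !lift_normE.
  by rewrite norm_unit1.
by rewrite norm_unitM.
Qed.

Lemma lift_norm_inj : injective (lift_norm iota).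
Proof.
move=> a b eq_ab; apply/ffunP => y; have [u <-] := norm_unit_surj iota dvd_card y.
by rewrite -!lift_normE eq_ab.
Qed.

Lemma twist_char c0 chi : is_char c0 -> is_char chi -> is_char (twist c0 chi).
Proof. by move=> c0_char chi_char; apply/cmul_char/lift_norm_char. Qed.

Lemma twist_inj c0 : is_char c0 -> injective (twist c0).
Proof.
move=> c0_char a b eq_ab; apply: lift_norm_inj; apply/ffunP => u.
have /(congr1 (fun c : chr L => c u)) := eq_ab; rewrite !ffunE.
exact/mulfI/char_neq0.
Qed.

Lemma twist_cexp c0 chi d : cexp (twist c0 chi) d = twist (cexp c0 d) (cexp chi d).
Proof. by apply/ffunP => u; rewrite !ffunE exprMn. Qed.

Lemma cprod_twist c0 (s : seq (chr F)) :
  Defs.cprod (map (twist c0) s) =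
  cmul (cexp c0 (size s)) (lift_norm iota (Defs.cprod s)).
Proof.
apply/ffunP => u; elim: s => [|chi s IHs]; first by rewrite !ffunE mulr1.
by move: IHs; rewrite /= !ffunE => ->; rewrite exprS; ring.
Qed.

Lemma twist_dual c0 xi chi : is_char c0 ->
  cmul (cmul (cexp c0 2) (lift_norm iota xi)) (cinv (twist c0 chi)) =
  twist c0 (cmul xi (cinv chi)).
Proof.
move=> c0_char; apply/ffunP => u.
by rewrite !ffunE invfM expr2 mulrACA mulfK ?char_neq0.
Qed.

End Twist.

Lemma finField_natr_card (K : finFieldType) : (#|K|%:R : K) = 0.
Proof. by rewrite -FinRing.zmodXgE -cardsT expg_cardG ?inE. Qed.

Lemma finField_natr_card_pred_neq0 (K : finFieldType) : (#|K|.-1%:R : K) != 0.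
Proof.
apply: contra_neq (oner_neq0 K) => card_pred0.
rewrite -(finField_natr_card K) -(ltn_predK (finNzRing_gt1 K)) -addn1 natrD.
by rewrite card_pred0 add0r.
Qed.

Lemma finField_ext_dvd_card_pred (F : finFieldType) (M : nat) : (M%:R : F) != 0 ->
  exists (L : finFieldType) (iota : {rmorphism F -> L}), (M %| #|L|.-1)%N.
Proof.
move=> M_neq0; have M_gt0 : (0 < M)%N by case: M M_neq0; rewrite ?eqxx.
have XM1_neq0 : ('X^M - 1 : {poly F}) != 0 by rewrite -size_poly_eq0 size_XnsubC.
have [L0 [rs splitL0 _]] := FinSplittingFieldFor XM1_neq0.
rewrite rmorphB /= map_polyXn rmorph1 in splitL0.
have M_neq0_L0 : (M%:R : L0) != 0 by rewrite -(rmorph_nat (in_alg L0)) fmorph_eq0.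
have uniq_rs : uniq rs.
  by rewrite -separable_prod_XsubC -(eqp_separable splitL0) separable_Xn_sub_1.
have size_rs : size rs = M.
  by have := eqp_size splitL0; rewrite size_prod_XsubC size_XnsubC // => -[].
have unity_rs : all M.-unity_root rs.
  apply/allP => z z_rs.
  by have : root ('X^M - 1) z by rewrite (eqp_root splitL0) root_prod_XsubC.
have [z _ prim_z] := hasP (has_prim_root M_gt0 unity_rs uniq_rs (eq_leq (esym size_rs))).
pose L := FinFieldExtType L0.
exists L, (in_alg L0 : {rmorphism F -> L}).
rewrite (prim_order_dvd prim_z) (@finField_expr_card_pred L) //.
apply: contra_eq_neq (prim_expr_order prim_z) => ->.
by rewrite expr0n gtn_eqF // eq_sym oner_neq0.
Qed.

Lemma unity_root_coprime_root (R : pzRingType) (A N : nat) (y : R) :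
  (0 < N)%N -> coprime A N -> y ^+ N = 1 -> exists z : R, z ^+ N = 1 /\ z ^+ A = y.
Proof.
move=> N_gt0 coprime_AN yN1; exists (y ^+ (A ^ (totient N).-1)); split.
  by rewrite -exprM mulnC exprM yN1 expr1n.
rewrite -exprM mulnC -expnS prednK ?totient_gt0 //.
by rewrite -(expr_mod _ yN1) Euler_exp_totient // expr_mod.
Qed.

Lemma twist_root_exists (F : finFieldType) (phi : chr F) (m : nat) :
  is_char phi -> (0 < m)%N ->
  exists (L : finFieldType) (iota : {rmorphism F -> L}) (c0 : chr L),
    [/\ (#|F|.-1 %| #|L|.-1)%N, is_char c0 &
        cmul (cexp c0 m) (lift_norm iota phi) = ctriv L].
Proof.
move=> phi_char m_gt0; have [p p_prime pcharFp] := finPcharP F.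
have Bn_neq0 : ((m`_p^' * #|F|.-1)%N%:R : F) != 0.
  rewrite natrM mulf_neq0 ?finField_natr_card_pred_neq0 //.
  by rewrite -(dvdn_pcharf pcharFp) -p'natE // part_pnat.
have [L [iota dvd_L]] := finField_ext_dvd_card_pred Bn_neq0.
have dvd_card : (#|F|.-1 %| #|L|.-1)%N := dvdn_trans (dvdn_mull _ (dvdnn _)) dvd_L.
have coprime_pL : coprime m`_p #|L|.-1.
  have pcharLp : p \in [pchar L] by rewrite (fmorph_pchar iota).
  apply: (pnat_coprime (part_pnat _ _)).
  by rewrite p'natE // (dvdn_pcharf pcharLp) finField_natr_card_pred_neq0.
have [g gen_g] := unit_generator_exists L.
pose w := (phi (norm_unit iota g))^-1.
have [z0 [z0L z0p']] : exists z0 : algC, z0 ^+ #|L|.-1 = 1 /\ z0 ^+ m`_p^' = w.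
  exists ((m`_p^').-root w); rewrite rootCK ?part_gt0 //; split=> //.
  have [c ->] := dvdnP dvd_L.
  rewrite mulnCA exprM rootCK ?part_gt0 // mulnC exprM.
  by rewrite exprVn char_unity_root ?invr1 ?expr1n.
have [|z [zL zp]] := unity_root_coprime_root _ coprime_pL z0L.
  by rewrite ltn_predRL finNzRing_gt1.
have [c0 [c0_char c0g]] := char_of_unity_root gen_g zL.
exists L, iota, c0; split=> //.
apply: (char_eq_gen gen_g).
- by apply: cmul_char; [exact: cexp_char | exact: lift_norm_char].
- exact: ctriv_char.
by rewrite !ffunE c0g -(partnC p m_gt0) exprM zp z0p' mulVf ?char_neq0.
Qed.

Lemma size_undup_count (T : eqType) (t : seq T) :
  size t = (\sum_(c <- undup t) count_mem c t)%N.
Proof.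
rewrite -sum1_size -(big_undup_iterop_count _ t predT (fun _ => 1%N)).
by apply: eq_bigr => c _; rewrite Monoid.iteropE iter_addn_0 mul1n.
Qed.

Lemma sum_count_exchange (T U : eqType) (r : T -> U -> bool) (s : seq T) (t : seq U) :
  (\sum_(x <- s) count (r x) t = \sum_(y <- t) count (r^~ y) s)%N.
Proof.
under eq_bigr do rewrite -sum1_count big_mkcond /=.
rewrite exchange_big; apply: eq_bigr => y _.
by rewrite -sum1_count [RHS]big_mkcond.
Qed.

Lemma leq_sum_const_eq (T : eqType) (E : T -> nat) (d : nat) (s : seq T) :
  (forall x, E x <= d)%N -> (\sum_(x <- s) E x = size s * d)%N ->
  {in s, forall x, E x = d}.
Proof.
move=> le_Ed sumE x xs; apply/eqP; rewrite eqn_leq le_Ed -subn_eq0 /=.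
have : (\sum_(y <- s) (d - E y) == 0)%N.
  by rewrite sumnB // sumE big_const_seq count_predT iter_addn_0 mulnC subnn.
by rewrite sum_nat_seq_eq0 => /allP/(_ x xs).
Qed.

Lemma subset_map_lift (T U : eqType) (f : T -> U) (s : seq T) (xs : seq U) :
  {subset xs <= map f s} -> exists2 zs, {subset zs <= s} & map f zs = xs.
Proof.
elim: xs => [|x xs IHxs] sub_xs; first by exists [::].
have /mapP[z zs ->] := sub_xs x (mem_head _ _).
have [|ys sub_ys <-] := IHxs; first by move=> y yxs; apply: sub_xs; rewrite inE yxs orbT.
by exists (z :: ys) => // y; rewrite inE => /predU1P[-> | /sub_ys].
Qed.

Lemma kummer_roots (K : finFieldType) (t xis : seq (chr K)) (d : nat) :
  {in t, forall c, is_char c} -> (0 < d)%N -> (d %| size t)%N ->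
  size xis = (size t %/ d)%N ->
  (forall chi, is_char chi -> count_mem chi t = count (fun xi => cexp chi d == xi) xis) ->
  {subset xis <= [seq cexp c d | c <- t]}.
Proof.
move=> t_char d_gt0 dvd_t size_xis count_t.
have [g gen_g] := unit_generator_exists K.
pose roots x := count (fun c => cexp c d == x) (undup t).
have roots_le x : (roots x <= d)%N.
  apply: (count_char_roots_le gen_g x d_gt0 (undup_uniq t)) => c.
  by rewrite mem_undup => /t_char.
have sum_roots : (\sum_(x <- xis) roots x = size xis * d)%N.
  rewrite size_xis divnK // size_undup_count.
  rewrite (sum_count_exchange (fun x c => cexp c d == x)).
  by apply: eq_big_seq => c; rewrite mem_undup => /t_char/count_t.
move=> x /(leq_sum_const_eq roots_le sum_roots) roots_x.
have : (0 < roots x)%N by rewrite roots_x.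
rewrite -has_count => /hasP[c]; rewrite mem_undup => c_t /eqP <-.
exact: map_f.
Qed.

Section TwistedTuples.
Variables (F L : finFieldType) (iota : {rmorphism F -> L}).
Hypothesis dvd_card : (#|F|.-1 %| #|L|.-1)%N.
Variables (c0 : chr L) (s : seq (chr F)).
Hypotheses (c0_char : is_char c0) (s_char : {in s, forall chi, is_char chi}).
Hypotheses (s_gt0 : (0 < size s)%N) (not_kummer : ~ kummer_induced s).

Local Notation twist := (twist iota).

Lemma kummer_untwist : kummer_induced (map (twist c0) s) -> kummer_induced s.
Proof.
move=> [d [xis [dvd_d d_neq1 size_xis xis_char count_t]]].
rewrite size_map in dvd_d size_xis.
have d_gt0 : (0 < d)%N.
  by rewrite lt0n; apply: contraTneq dvd_d => ->; rewrite dvd0n -lt0n.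
have t_char : {in map (twist c0) s, forall c, is_char c}.
  by move=> _ /mapP[chi /s_char chi_char ->]; apply: twist_char.
have := kummer_roots t_char d_gt0 _ _ count_t; rewrite size_map -map_comp.
case/(_ dvd_d size_xis)/subset_map_lift => zs zs_s def_xis.
have twist_cexp_inj : injective (twist (cexp c0 d)) by apply/twist_inj/cexp_char.
exists d, [seq cexp z d | z <- zs]; split=> //.
- by rewrite !size_map -size_xis -def_xis size_map.
- by move=> _ /mapP[z /zs_s/s_char z_char ->]; apply: cexp_char.
move=> chi chi_char.
have -> : count_mem chi s = count_mem (twist c0 chi) (map (twist c0) s).
  rewrite count_map; apply: eq_count => psi /=.
  by rewrite (inj_eq (twist_inj dvd_card c0_char)).
rewrite count_t; last exact: twist_char.
rewrite -def_xis !count_map.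
by apply: eq_count => psi /=; rewrite !twist_cexp (inj_eq twist_cexp_inj).
Qed.

Lemma selfdual_twist xi : selfdual_wrt xi s ->
  selfdual_wrt (cmul (cexp c0 2) (lift_norm iota xi)) (map (twist c0) s).
Proof.
move=> [xi_char perm_s]; split.
  by apply: cmul_char; [exact: cexp_char | exact: lift_norm_char].
rewrite -map_comp (eq_map (fun chi => twist_dual iota xi chi c0_char)).
by have := perm_map (twist c0) perm_s; rewrite -map_comp.
Qed.

Lemma selfdual_untwist xi' : selfdual_wrt xi' (map (twist c0) s) ->
  exists xi, selfdual_wrt xi s.
Proof.
case: s s_char => [|chi1 s'] s_char' [xi'_char perm_t].
  by exists (ctriv F); split; [exact: ctriv_char | ].
have : cmul xi' (cinv (twist c0 chi1)) \in map (twist c0) (chi1 :: s').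
  rewrite (perm_mem perm_t); apply: (map_f (fun c => cmul xi' (cinv c))).
  exact/map_f/mem_head.
case/mapP => chi2 chi2_s def_chi2.
have def_xi' : xi' = cmul (cexp c0 2) (lift_norm iota (cmul chi1 chi2)).
  apply/ffunP => u; have /(congr1 (fun c : chr L => c u)) := def_chi2.
  have chi1_char : is_char chi1 by apply: s_char'; rewrite mem_head.
  have den_neq0 : c0 u * chi1 (norm_unit iota u) != 0 by rewrite mulf_neq0 ?char_neq0.
  rewrite !ffunE => def_chi2u; rewrite -[xi' u](mulfVK den_neq0) def_chi2u.
  by rewrite mulrACA -expr2 [chi2 _ * _]mulrC.
exists (cmul chi1 chi2); split.
  by apply: cmul_char; apply: s_char'; rewrite ?mem_head.
apply: (perm_map_inj (twist_inj dvd_card c0_char)); apply: (perm_trans perm_t).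
by rewrite -!map_comp def_xi' (eq_map (fun chi => twist_dual iota _ chi c0_char)).
Qed.

Lemma CGM_twist_alternating xi : alternating_wrt xi s ->
  cmul (cexp c0 2) (lift_norm iota xi) = ctriv L -> CGM (map (twist c0) s).
Proof.
move=> [xi_dual [k_even prod_s]] c0_xi.
have prod_t : Defs.cprod (map (twist c0) s) = ctriv L.
  apply/ffunP => u; have /(congr1 (fun c : chr L => c u)) := c0_xi.
  rewrite cprod_twist prod_s !ffunE -{1}(divnK (_ : (2 %| size s)%N)) ?dvdn2 //.
  by rewrite mulnC exprM -exprMn => ->; rewrite expr1n.
split=> //; first exact: contra_not kummer_untwist not_kummer.
apply: Or33; split; first by rewrite -c0_xi; apply: selfdual_twist.
by rewrite size_map prod_t; split=> //; apply/ffunP => u; rewrite !ffunE expr1n.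
Qed.

Lemma CGM_twist_not_alternating :
  ~ (~~ odd (size s) /\ exists xi, selfdual_wrt xi s) ->
  cmul (cexp c0 (size s)) (lift_norm iota (Defs.cprod s)) = ctriv L ->
  CGM (map (twist c0) s).
Proof.
move=> not_even_dual c0_prod; split.
- exact: contra_not kummer_untwist not_kummer.
- by rewrite cprod_twist.
rewrite size_map; have [k_odd | k_even] := boolP (odd (size s)); first exact: Or31.
apply: Or32 => -[xi' /selfdual_untwist].
by move=> dual_s; apply: not_even_dual.
Qed.

End TwistedTuples.

Theorem lemma6p3 (F : finFieldType) (s : seq (chr F)) :
  (2 <= size s)%N ->
  (forall chi, chi \in s -> is_char chi) ->
  NIO s ->
  exists (L : finFieldType) (iota : {rmorphism F -> L}) (chi0 : chr L),
    is_char chi0 /\ CGM (map (fun chi => cmul chi0 (lift_norm iota chi)) s).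
Proof.
move=> k_ge2 s_char [not_kummer not_symmetric]; have s_gt0 := ltnW k_ge2.
have [[k_even [xi xi_dual]] | not_alternating] :=
  classic (~~ odd (size s) /\ exists xi, selfdual_wrt xi s).
  have prod_s : Defs.cprod s = cexp xi (size s %/ 2).
    apply: NNPP => prod_neq; apply: (not_symmetric k_even).
    by exists xi; split=> // -[].
  have [L [iota [c0 [dvd_card c0_char c0_xi]]]] :=
    twist_root_exists (proj1 xi_dual) (isT : 0 < 2)%N.
  exists L, iota, c0; split=> //.
  exact: (CGM_twist_alternating (iota := iota) dvd_card c0_char s_char s_gt0 not_kummer
           (conj xi_dual (conj k_even prod_s)) c0_xi).
have [L [iota [c0 [dvd_card c0_char c0_prod]]]] :=
  twist_root_exists (cprod_char s_char) s_gt0.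
exists L, iota, c0; split=> //.
exact: (CGM_twist_not_alternating (iota := iota) dvd_card c0_char s_char s_gt0 not_kummer
         not_alternating c0_prod).
Qed.
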